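(* For every $n$ there exists a binary matrix $M \in \{0,1\}^{n \times n}$ with twin-width at most $3$ whose row-Hamming-coherence and column-Hamming-coherence satisfy $\mathscr{H}^r(M), \mathscr{H}^c(M) \in \Omega(n \log n)$.
   Context: The Hamming distance of $u,v\in\{0,1\}^n$ is $d(u,v)=\sum_{i=1}^n|u_i-v_i|$. Let $r^{(1)},\dots,r^{(n)}$ be the rows of $M$. For a permutation $\pi$ of $[n]$, the row-Hamming-sum is $\mathscr{H}^r_\pi(M)=\sum_{i=1}^{n-1} d(r^{(\pi(i))},r^{(\pi(i+1))})$, and the row-Hamming-coherence is $\mathscr{H}^r(M)=\min_\pi \mathscr{H}^r_\pi(M)$. The column-Hamming-coherence $\mathscr{H}^c(M)$ is defined analogously using the columns. Twin-width. A division of an $n\times n$ matrix $M$ is a pair $(\mathcal{R},\mathscr{C})$ of partitions of $[n]$ into contiguous non-empty intervals; the cell $(i,j)$ is the submatrix with rows in the $i$-th interval of $\mathcal{R}$ and columns in the $j$-th interval of $\mathscr{C}$; a cell is constant if all its entries are equal. A row (resp. column) of the division is the set of cells sharing a given interval of $\mathcal{R}$ (resp. $\mathscr{C}$). A merge sequence is a sequence of divisions $(\mathcal{R}_{2n-1},\mathscr{C}_{2n-1}),\dots,(\mathcal{R}_1,\mathscr{C}_1)$ starting from the singleton partitions, ending with $\mathcal{R}_1=\mathscr{C}_1=\{[n]\}$, each obtained from the previous by merging two adjacent intervals of either the row or the column partition. It is $d$-wide if in every division every row and every column contains at most $d$ non-constant cells. $M$ is $d$-twin-ordered if it admits a $d$-wide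 merge sequence; the twin-width of $M$ is the least $d$ such that some permutation of the rows and of the columns of $M$ is $d$-twin-ordered. *)

From mathcomp Require Import all_boot all_order all_algebra all_fingroup.
Set Implicit Arguments. Unset Strict Implicit. Unset Printing Implicit Defensive.

Definition row_dist n (M : 'M[bool]_n) (i i' : 'I_n) : nat :=
  \sum_(j : 'I_n) (M i j != M i' j).

Definition row_hamming_sum n (M : 'M[bool]_n) (p : 'S_n) : nat :=
  \sum_(i : 'I_n) \sum_(j : 'I_n | (j : nat) == i.+1) row_dist M (p i) (p j).

Definition row_coherence n (M : 'M[bool]_n) : nat :=
  row_hamming_sum M [arg min_(p < (1%g : 'S_n)) row_hamming_sum M p].

Definition col_coherence n (M : 'M[bool]_n) : nat := row_coherence M^T.

(* A partition of [n] into contiguous nonempty intervals is encoded by its set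
   of cut points C : positions k > 0 at which a new interval starts.
   i and j lie in the same interval iff no cut point k with min(i,j) < k <= max(i,j). *)
Definition same_part n (C : {set 'I_n}) (i j : 'I_n) : bool :=
  [forall k : 'I_n, ((minn i j < k) && (k <= maxn i j)) ==> (k \notin C)].

Definition part_start n (C : {set 'I_n}) (j : 'I_n) : bool :=
  ((j : nat) == 0) || (j \in C).

Definition nonconst_cell n (M : 'M[bool]_n) (R C : {set 'I_n}) (i j : 'I_n) : bool :=
  [exists i1, exists i2, exists j1, exists j2,
     [&& same_part R i i1, same_part R i i2, same_part C j j1, same_part C j j2
       & M i1 j1 != M i2 j2]].

(* Every row and every column of the division contains at most d non-constant cells
   (cells of a row are counted once each, via the first index of their column interval). *)
Definition d_wide_division n (M : 'M[bool]_n) (d : nat) (D : {set 'I_n} * {set 'I_n}) : bool :=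
  [forall i, #|[set j | part_start D.2 j && nonconst_cell M D.1 D.2 i j]| <= d] &&
  [forall j, #|[set i | part_start D.1 i && nonconst_cell M D.1 D.2 i j]| <= d].

Definition all_cuts n : {set 'I_n} := [set k : 'I_n | 0 < k].

(* Merging two adjacent intervals = removing one cut point, in the row or in the
   column partition. *)
Definition merge_step n (D D' : {set 'I_n} * {set 'I_n}) : Prop :=
  exists k : 'I_n, 0 < k /\
    ((k \in D.1 /\ D' = (D.1 :\ k, D.2)) \/ (k \in D.2 /\ D' = (D.1, D.2 :\ k))).

(* A merge sequence: divisions s 0, ..., s (2n-2) (the paper's
   (R_{2n-1},C_{2n-1}), ..., (R_1,C_1)), from singletons to the trivial division. *)
Definition merge_sequence n (s : nat -> {set 'I_n} * {set 'I_n}) : Prop :=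
  s 0 = (all_cuts n, all_cuts n) /\
  s (2 * n - 2) = (set0, set0) /\
  forall t, t < 2 * n - 2 -> merge_step (s t) (s t.+1).

Definition twin_ordered n (M : 'M[bool]_n) (d : nat) : Prop :=
  exists s, merge_sequence s /\ forall t, t <= 2 * n - 2 -> d_wide_division M d (s t).

Definition twin_width_le n (M : 'M[bool]_n) (d : nat) : Prop :=
  exists (sr sc : 'S_n), twin_ordered (\matrix_(i, j) M (sr i) (sc j)) d.

From mathcomp Require Import all_boot all_order all_algebra all_fingroup.
From mathcomp Require Import zify.
Set Implicit Arguments. Unset Strict Implicit. Unset Printing Implicit Defensive.

(* The matrix is [M i j = odd h(i, j)], where [h(i, j)] is the height of the lowest
   common ancestor of the leaves [i] and [j] of the complete binary tree whose
   height-[l] subtrees are the dyadic intervals of length [2 ^ l].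

   Twin-width: merge the dyadic intervals level by level.  While the row and the
   column partitions both lie between the dyadic partitions of sizes [2 ^ h] and
   [2 ^ h.+1], [h] is constant on every cell whose row and column intervals lie in
   different [2 ^ h.+1]-intervals; so each row or column of the division meets at
   most two non-constant cells.

   Coherence: rows [a] and [b] with [h(a, b) = k] differ on the whole sibling
   subtree of size [2 ^ (k - 2)] below their common ancestor.  Any ordering of the
   rows moves at least [n / 2 ^ l] times between different [2 ^ l]-intervals,
   paying [2 ^ (l - 2)] each time; summed over the [log n] levels this is
   [Omega(n log n)].  The matrix is symmetric, so columns behave alike. *)

Lemma eq_divn_expn_mono d s t x y : s <= t ->
  x %/ d ^ s = y %/ d ^ s -> x %/ d ^ t = y %/ d ^ t.
Proof. by move=> le_st exy; rewrite -(subnKC le_st) expnD !divnMA exy. Qed.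

Lemma neq_divn_expn_mono d s t x y : s <= t ->
  x %/ d ^ t != y %/ d ^ t -> x %/ d ^ s != y %/ d ^ s.
Proof. by move=> le_st; apply: contra_neq; exact: eq_divn_expn_mono. Qed.

(* [x %/ 2 ^ s] is the height-[s] ancestor of the leaf [x]; for [x, y < b] the
   ancestors at height [b] agree, so the count below is exactly [h(x, y)]. *)
Definition lca_height b x y := \sum_(s < b) (x %/ 2 ^ s != y %/ 2 ^ s).

Lemma lca_heightC b x y : lca_height b x y = lca_height b y x.
Proof. by apply: eq_bigr => s _; rewrite eq_sym. Qed.

Lemma lca_heightE b x y k : k <= b -> x %/ 2 ^ k = y %/ 2 ^ k ->
  (forall s, s < k -> x %/ 2 ^ s != y %/ 2 ^ s) -> lca_height b x y = k.
Proof.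
move=> le_kb exy_k neq_lt; rewrite /lca_height.
rewrite (eq_bigr (fun s : 'I_b => nat_of_bool (s < k))); last first.
  move=> s _; case: (ltnP s k) => [/neq_lt -> // | le_ks].
  by rewrite (eq_divn_expn_mono le_ks exy_k) eqxx.
by rewrite -big_mkcond /= (big_ord_narrow le_kb) big_const_ord iter_addn_0 mul1n.
Qed.

Lemma lca_heightS b x y k : k < b -> x %/ 2 ^ k != y %/ 2 ^ k ->
  x %/ 2 ^ k.+1 = y %/ 2 ^ k.+1 -> lca_height b x y = k.+1.
Proof.
move=> lt_kb neq_k eq_k1; apply: lca_heightE => // s; rewrite ltnS => le_sk.
exact: neq_divn_expn_mono neq_k.
Qed.

Lemma lca_height_spec b x y : x < b -> y < b ->
  let k := lca_height b x y in
  x %/ 2 ^ k = y %/ 2 ^ k /\ forall s, s < k -> x %/ 2 ^ s != y %/ 2 ^ s.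
Proof.
move=> xb yb; have top : x %/ 2 ^ b == y %/ 2 ^ b.
  by rewrite !divn_small // (leq_trans _ (ltnW (ltn_expl b (isT : 1 < 2)))).
case: (ex_minnP (ex_intro (fun k => x %/ 2 ^ k == y %/ 2 ^ k) b top)).
move=> k /eqP exy_k min_k; have neq_lt s : s < k -> x %/ 2 ^ s != y %/ 2 ^ s.
  by move=> lt_sk; apply: contraTneq lt_sk => /eqP/min_k; rewrite -leqNgt.
by rewrite /= (lca_heightE (min_k _ top) exy_k neq_lt).
Qed.

Lemma lca_height_blocks b t x x' y y' :
  x' %/ 2 ^ t = x %/ 2 ^ t -> y' %/ 2 ^ t = y %/ 2 ^ t ->
  x %/ 2 ^ t != y %/ 2 ^ t -> lca_height b x' y' = lca_height b x y.
Proof.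
move=> ex ey neq_t; apply: eq_bigr => s _; case: (leqP t s) => [le_ts | lt_st].
  by rewrite (eq_divn_expn_mono le_ts ex) (eq_divn_expn_mono le_ts ey).
have neq_t' : x' %/ 2 ^ t != y' %/ 2 ^ t by rewrite ex ey.
by rewrite !(neq_divn_expn_mono (ltnW lt_st)).
Qed.

Lemma lca_height_le b x y : lca_height b x y <= b.
Proof.
rewrite -[b in _ <= b]card_ord -sum1_card.
by apply: leq_sum => s _; case: (_ != _).
Qed.

Definition lca_parity_mx n : 'M[bool]_n := \matrix_(i, j) odd (lca_height n i j).

Lemma tr_lca_parity_mx n : trmx (lca_parity_mx n) = lca_parity_mx n.
Proof. by apply/matrixP => i j; rewrite !mxE lca_heightC. Qed.

Lemma row_distE n (M : 'M[bool]_n) a b : row_dist M a b = #|[set j | M a j != M b j]|.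
Proof.
rewrite -sum1_card big_mkcond; apply: eq_bigr => j _.
by rewrite inE; case: (_ != _).
Qed.

Lemma row_distC n (M : 'M[bool]_n) a b : row_dist M a b = row_dist M b a.
Proof. by apply: eq_bigr => j _; rewrite eq_sym. Qed.

Lemma card_divn_eq_ge n d q : q.+1 * d <= n -> d <= #|[set j : 'I_n | j %/ d == q]|.
Proof.
move=> le_n; case: (posnP d) => [-> // | d_gt0].
have lt_n (r : 'I_d) : q * d + r < n by move: (ltn_ord r) le_n; rewrite mulSn; lia.
pose f (r : 'I_d) : 'I_n := Ordinal (lt_n r).
have f_inj : injective f by move=> r r' /(congr1 val) /= /addnI /val_inj.
rewrite -[d in d <= _]card_ord -(card_imset _ f_inj); apply: subset_leq_card.
by apply/subsetP => _ /imsetP [r _ ->]; rewrite inE /= divnMDl // divn_small ?addn0.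
Qed.

Lemma row_dist_lca_ge n (a b : 'I_n) :
  2 ^ lca_height n a b %/ 4 <= row_dist (lca_parity_mx n) a b.
Proof.
wlog lt_ab : a b / a < b.
  move=> W; case: (ltngtP a b) => [/W // | lt_ba | /val_inj ->].
    by rewrite lca_heightC row_distC; exact: W.
  by rewrite /lca_height big1 // => s _; rewrite eqxx.
have [exy_k neq_lt] := lca_height_spec (ltn_ord a) (ltn_ord b).
have le_kn := lca_height_le n a b.
move: exy_k neq_lt le_kn; case: (lca_height n a b) => [|[|m]] //= exy_k neq_lt le_kn.
have -> : 2 ^ m.+2 %/ 4 = 2 ^ m by rewrite !expnS mulnA mulKn.
set A := a %/ 2 ^ m.+1.
have [w [w_half w_neq]] : exists w, w %/ 2 = A /\ w != a %/ 2 ^ m.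
  rewrite /A expnSr divnMA; set al := a %/ 2 ^ m.
  by exists (al %/ 2 * 2 + (1 - al %% 2)); split; lia.
(* [w] is the sibling of the height-[m] ancestor of [a]; its leaves precede [b]. *)
have split_w (j : 'I_n) : j %/ 2 ^ m == w ->
    lca_height n a j = m.+1 /\ lca_height n b j = m.+2.
  move=> /eqP jw; have jA : j %/ 2 ^ m.+1 = A by rewrite expnSr divnMA jw.
  split; apply: lca_heightS.
  - exact: ltnW le_kn.
  - by rewrite jw eq_sym.
  - by rewrite jA.
  - exact: le_kn.
  - by rewrite jA eq_sym /A neq_lt.
  - by rewrite -exy_k (expnSr 2 m.+1) !divnMA jA.
have lt_AB : A < b %/ 2 ^ m.+1.
  by rewrite ltn_neqAle neq_lt // leq_div2r // ltnW.
have le_B : b %/ 2 ^ m.+1 * 2 ^ m.+1 <= b := leq_divM b _.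
rewrite row_distE; apply: leq_trans (card_divn_eq_ge (q := w) _) (subset_leq_card _).
  have le_w : w.+1 <= A.+1 * 2 by lia.
  apply: leq_trans (leq_mul le_w (leqnn _)) _; rewrite -mulnA -expnS.
  apply: leq_trans (ltnW (ltn_ord b)); apply: leq_trans le_B.
  by rewrite leq_mul2r lt_AB orbT.
apply/subsetP => j; rewrite !inE !mxE => /split_w [-> ->].
by rewrite /= negbK; case: (odd m).
Qed.

Lemma sum_expn2_div4 k : \sum_(l < k) 2 ^ l %/ 4 <= 2 ^ k %/ 4.
Proof.
elim: k => [|k IHk]; first by rewrite big_ord0.
rewrite big_ord_recr /=; apply: leq_trans (leq_add IHk (leqnn _)) _.
by rewrite expnS; set P := 2 ^ k; lia.
Qed.

(* A lower bound for [2 ^ lca_height n x y %/ 4] that is additive over the levels. *)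
Definition split_weight n x y := \sum_(l < n) 2 ^ l %/ 4 * (x %/ 2 ^ l != y %/ 2 ^ l).

Lemma split_weight_le_row_dist n (a b : 'I_n) :
  split_weight n a b <= row_dist (lca_parity_mx n) a b.
Proof.
apply: leq_trans (row_dist_lca_ge a b).
have [exy_k neq_lt] := lca_height_spec (ltn_ord a) (ltn_ord b).
have le_kn := lca_height_le n a b.
set k := lca_height n a b in exy_k neq_lt le_kn *.
rewrite /split_weight (eq_bigr (fun l : 'I_n => if l < k then 2 ^ l %/ 4 else 0)).
  by rewrite -big_mkcond (big_ord_narrow le_kn) sum_expn2_div4.
move=> l _; case: (ltnP l k) => [/neq_lt -> | le_kl]; first by rewrite muln1.
by rewrite (eq_divn_expn_mono le_kl exy_k) eqxx muln0.
Qed.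

Lemma row_hamming_sumE n (M : 'M[bool]_n.+1) (p : 'S_n.+1) :
  row_hamming_sum M p = \sum_(k < n) row_dist M (p (inord k)) (p (inord k.+1)).
Proof.
rewrite /row_hamming_sum big_ord_recr /= [X in _ + X]big_pred0; last first.
  by move=> j; rewrite ltn_eqF.
rewrite addn0; apply: eq_bigr => i _.
have -> : widen_ord (leqnSn n) i = inord i by apply: val_inj; rewrite /= inordK // leqW.
by apply: (big_pred1 (inord i.+1)) => j /=; rewrite -val_eqE /= inordK // ltnS.
Qed.

Lemma size_undup_le_changes (T : eqType) (f : nat -> T) m :
  size (undup [seq f k | k <- iota 0 m.+1]) <= (\sum_(k < m) (f k != f k.+1)).+1.
Proof.
elim: m f => [|m IHm] f; first by rewrite big_ord0.
set g := f \o succn; have := IHm g.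
have -> : [seq f k | k <- iota 0 m.+2] = f 0 :: [seq g k | k <- iota 0 m.+1].
  by rewrite -[iota 0 m.+2]/(0 :: iota 1 m.+1) (iotaDl 1 0) map_cons -map_comp.
have -> : \sum_(k < m.+1) (f k != f k.+1) = (f 0 != g 0) + \sum_(k < m) (g k != g k.+1).
  by rewrite big_ord_recl.
have : g 0 \in [seq g k | k <- iota 0 m.+1] by rewrite map_f ?mem_iota.
move: [seq g k | k <- iota 0 m.+1] (\sum_(k < m) _) => s c g0s IH /=.
case: ifP => [_ | f0_new]; first by apply: leq_trans IH _; rewrite ltnS leq_addl.
by have -> : f 0 != g 0 by apply: contraFneq f0_new => ->.
Qed.

Lemma divn_le_perm_changes n (p : 'S_n.+1) d : 0 < d ->
  n %/ d <= \sum_(k < n) (p (inord k) %/ d != p (inord k.+1) %/ d).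
Proof.
move=> d_gt0; rewrite -ltnS.
apply: leq_trans (size_undup_le_changes (fun k => p (inord k) %/ d) n).
rewrite -[X in X <= _](size_iota 0); apply: uniq_leq_size (iota_uniq _ _) _ => q.
rewrite mem_iota mem_undup add0n ltnS => /andP [_ le_q].
have lt_qd : q * d < n.+1 by rewrite ltnS -leq_divRL.
apply/mapP; exists (val (p^-1 (Ordinal lt_qd))%g); first by rewrite mem_iota /= ltn_ord.
by rewrite inord_val permKV /= mulnK.
Qed.

Lemma row_hamming_sum_lca_ge n (p : 'S_n.+1) :
  \sum_(l < n.+1) 2 ^ l %/ 4 * (n %/ 2 ^ l) <= row_hamming_sum (lca_parity_mx n.+1) p.
Proof.
rewrite row_hamming_sumE.
apply: (@leq_trans (\sum_(k < n) split_weight n.+1 (p (inord k)) (p (inord k.+1)))).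
  rewrite /split_weight exchange_big /=; apply: leq_sum => l _.
  by rewrite -big_distrr leq_mul2l divn_le_perm_changes ?orbT // expn_gt0.
by apply: leq_sum => k _; exact: split_weight_le_row_dist.
Qed.

Lemma level_sum_ge n K : 2 <= K -> 2 ^ K <= n ->
  (K.+1 - 2) * 2 ^ (K - 2) <= \sum_(l < n.+1) 2 ^ l %/ 4 * (n %/ 2 ^ l).
Proof.
move=> le_2K le_Kn; have lt_Kn : K < n by apply: leq_trans le_Kn; exact: ltn_expl.
rewrite -(big_mkord xpredT (fun l => 2 ^ l %/ 4 * (n %/ 2 ^ l))).
have le_K1n : K.+1 <= n.+1 by rewrite ltnS ltnW.
rewrite (@big_cat_nat _ _ _ 2) ?(leq_trans (leqW le_2K)) //=.
rewrite [X in _ + X](@big_cat_nat _ _ _ K.+1) ?(leqW le_2K) //=.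
rewrite -sum_nat_const_nat addnCA; apply: leq_trans (leq_addr _ _).
rewrite big_nat_cond [X in _ <= X]big_nat_cond.
apply: leq_sum => l /andP [/andP [le_2l]]; rewrite ltnS => le_lK _.
have -> : 2 ^ l %/ 4 = 2 ^ (l - 2) by rewrite -{1}(subnK le_2l) expnD mulnK.
have le_div : 2 ^ (K - l) <= n %/ 2 ^ l.
  by rewrite expnB // leq_div2r.
apply: leq_trans (leq_mul (leqnn _) le_div); rewrite -expnD leq_exp2l //; lia.
Qed.

Lemma n_log_le_level_sum n : 4 <= n ->
  n.+1 * trunc_log 2 n.+1 <= 24 * \sum_(l < n.+1) 2 ^ l %/ 4 * (n %/ 2 ^ l).
Proof.
move=> le_4n; set K := trunc_log 2 n.
have /andP [le_Kn lt_nK] : 2 ^ K <= n < 2 ^ K.+1 by apply: trunc_log_bounds; lia.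
have le_2K : 2 <= K by apply: trunc_log_max.
have le_logS : trunc_log 2 n.+1 <= K.+1.
  by rewrite -(@leq_exp2l 2) // (leq_trans (trunc_logP _ _)).
apply: leq_trans (leq_mul lt_nK le_logS) _.
apply: leq_trans (leq_mul (leqnn 24) (level_sum_ge le_2K le_Kn)).
have -> : 2 ^ K.+1 = 8 * 2 ^ (K - 2) by rewrite -(subnK le_2K) -addnS expnD mulnC addnK.
by rewrite [8 * _ * _]mulnAC [24 * _]mulnA leq_mul2r; apply/orP; right; lia.
Qed.

Definition block_cuts n h : {set 'I_n} := [set k : 'I_n | (0 < k) && (2 ^ h %| k)].

Lemma mem_block_cuts n h (k : 'I_n) : (k \in block_cuts n h) = (0 < k) && (2 ^ h %| k).
Proof. by rewrite inE. Qed.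

Lemma block_cutsS n h : block_cuts n h.+1 \subset block_cuts n h.
Proof.
apply/subsetP => k; rewrite !mem_block_cuts => /andP [-> dvd_k]; apply: dvdn_trans dvd_k.
by rewrite dvdn_exp2l.
Qed.

Lemma same_part_divn n (C : {set 'I_n}) t (i j : 'I_n) :
  block_cuts n t \subset C -> same_part C i j -> i %/ 2 ^ t = j %/ 2 ^ t.
Proof.
move=> sub_C /forallP no_cut.
wlog le_ij : i j no_cut / i <= j.
  move=> W; case: (leqP i j) => [le_ij | /ltnW le_ji]; first exact: W.
  by symmetry; apply: W => // k; rewrite minnC maxnC; exact: no_cut.
apply/eqP; apply: contraT => neq_ij.
have lt_ij : i %/ 2 ^ t < j %/ 2 ^ t by rewrite ltn_neqAle neq_ij leq_div2r.
set c := j %/ 2 ^ t * 2 ^ t.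
have le_cj : c <= j := leq_divM j _.
have lt_ic : i < c.
  by apply: leq_trans (ltn_ceil i (expn_gt0 2 t)) _; rewrite leq_mul2r lt_ij orbT.
have lt_cn : c < n := leq_ltn_trans le_cj (ltn_ord j).
have : Ordinal lt_cn \in C.
  by apply: (subsetP sub_C); rewrite mem_block_cuts /= (leq_ltn_trans _ lt_ic) ?dvdn_mull.
move: (no_cut (Ordinal lt_cn)) => /=.
by rewrite (minn_idPl le_ij) (maxn_idPr le_ij) lt_ic le_cj /= => /negPf ->.
Qed.

Lemma nonconst_cell_lca_parity n t (R C : {set 'I_n}) (i j : 'I_n) :
  block_cuts n t \subset R -> block_cuts n t \subset C ->
  nonconst_cell (lca_parity_mx n) R C i j -> i %/ 2 ^ t = j %/ 2 ^ t.
Proof.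
move=> sub_R sub_C /existsP [i1 /existsP [i2 /existsP [j1 /existsP [j2]]]].
case/and5P => /(same_part_divn sub_R) ei1 /(same_part_divn sub_R) ei2.
move=> /(same_part_divn sub_C) ej1 /(same_part_divn sub_C) ej2.
apply: contraTeq => neq_ij; rewrite !mxE negbK.
rewrite (lca_height_blocks _ (esym ei1) (esym ej1)) //.
by rewrite (lca_height_blocks _ (esym ei2) (esym ej2)).
Qed.

Lemma card_part_starts_le2 n h (X : {set 'I_n}) (P : pred 'I_n) q :
  X \subset block_cuts n h -> (forall x, P x -> x %/ 2 ^ h.+1 = q) ->
  #|[set x | part_start X x && P x]| <= 2.
Proof.
move=> sub_X in_q; set S := [set x | _].
have dvd_S x : x \in S -> 2 ^ h %| x.
  rewrite inE => /andP [/orP [/eqP -> _ | /(subsetP sub_X) + _]]; first exact: dvdn0.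
  by rewrite mem_block_cuts => /andP [].
have half_S x : x \in S -> x %/ 2 ^ h %/ 2 = q.
  by rewrite inE -divnMA -expnSr => /andP [_ /in_q].
have parity_inj : {in S &, injective (fun x : 'I_n => odd (x %/ 2 ^ h))}.
  move=> x y Sx Sy /= eq_odd; apply: val_inj => /=.
  rewrite -(divnK (dvd_S x Sx)) -(divnK (dvd_S y Sy)); congr (_ * _).
  by move: (half_S x Sx) (half_S y Sy) (congr1 nat_of_bool eq_odd); rewrite -!modn2; lia.
by rewrite -(card_in_imset parity_inj) (leq_trans (max_card _)) ?card_bool.
Qed.

(* On cut sets, inclusion is reversed refinement: both partitions of [D] refine the
   dyadic partition into intervals of size [2 ^ h.+1] and coarsen that of size [2 ^ h]. *)
Definition dyadic_at n h (D : {set 'I_n} * {set 'I_n}) : bool :=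
  [&& block_cuts n h.+1 \subset D.1, D.1 \subset block_cuts n h,
      block_cuts n h.+1 \subset D.2 & D.2 \subset block_cuts n h].

Lemma dyadic_at_wide n h d D : 2 <= d -> dyadic_at h D ->
  d_wide_division (lca_parity_mx n) d D.
Proof.
move=> le_2d /and4P [sub_R R_sub sub_C C_sub].
have same_block := nonconst_cell_lca_parity sub_R sub_C.
apply/andP; split; apply/forallP => i; apply: leq_trans _ le_2d.
  by apply: (card_part_starts_le2 (q := i %/ 2 ^ h.+1) C_sub) => j /same_block.
by apply: (card_part_starts_le2 (q := i %/ 2 ^ h.+1) R_sub) => j /same_block.
Qed.

Lemma merge_step_card n (D D' : {set 'I_n} * {set 'I_n}) :
  merge_step D D' -> #|D.1| + #|D.2| = (#|D'.1| + #|D'.2|).+1.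
Proof.
case=> k [_ [[kD ->] | [kD ->]]] /=.
  by rewrite (cardsD1 k D.1) kD.
by rewrite (cardsD1 k D.2) kD addnS.
Qed.

Lemma remove_cut n h (A : {set 'I_n}) :
  block_cuts n h.+1 \subset A -> A \subset block_cuts n h -> A != block_cuts n h.+1 ->
  exists k : 'I_n, [/\ 0 < k, k \in A, block_cuts n h.+1 \subset A :\ k
                      & A :\ k \subset block_cuts n h].
Proof.
move=> sub_A A_sub neq_A.
have [k kA kB] : exists2 k, k \in A & k \notin block_cuts n h.+1.
  by apply/subsetPn; apply: contra neq_A => A_sub'; rewrite eqEsubset A_sub'.
exists k; split => //.
- by move: (subsetP A_sub k kA); rewrite mem_block_cuts => /andP [].
- apply/subsetP => x xB; rewrite !inE (subsetP sub_A x xB) andbT.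
  by apply: contraNneq kB => <-.
- exact: subset_trans (subsetDl _ _) A_sub.
Qed.

Lemma dyadic_at_step n h (D : {set 'I_n} * {set 'I_n}) :
  dyadic_at h D -> D != (block_cuts n h.+1, block_cuts n h.+1) ->
  exists D', merge_step D D' /\ dyadic_at h D'.
Proof.
case: D => R C /and4P [sub_R R_sub sub_C C_sub] /= neq_D.
case: (eqVneq R (block_cuts n h.+1)) => [eq_R | neq_R].
  have neq_C : C != block_cuts n h.+1 by apply: contraNneq neq_D => ->; rewrite eq_R.
  have [k [k_gt0 kC sub_C' C_sub']] := remove_cut sub_C C_sub neq_C.
  exists (R, C :\ k); split; first by exists k; split => //; right.
  by apply/and4P.
have [k [k_gt0 kR sub_R' R_sub']] := remove_cut sub_R R_sub neq_R.
exists (R :\ k, C); split; first by exists k; split => //; left.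
by apply/and4P.
Qed.

Lemma block_cutsS_neq n h :
  block_cuts n h.+1 != set0 -> block_cuts n h.+2 != block_cuts n h.+1.
Proof.
case/set0Pn => k; rewrite mem_block_cuts => /andP [k_gt0 dvd_k].
have lt_n : 2 ^ h.+1 < n := leq_ltn_trans (dvdn_leq k_gt0 dvd_k) (ltn_ord k).
apply/eqP => /setP /(_ (Ordinal lt_n)); rewrite !mem_block_cuts /= expn_gt0 dvdnn.
by move/dvdn_leq; rewrite expn_gt0 leq_exp2l // ltnn => /(_ isT).
Qed.

Definition dyadic_division n (D : {set 'I_n} * {set 'I_n}) : Prop :=
  exists h, dyadic_at h D.

Lemma dyadic_division_step n (D : {set 'I_n} * {set 'I_n}) :
  dyadic_division D -> D != (set0, set0) ->
  exists D', merge_step D D' /\ dyadic_division D'.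
Proof.
case=> h Dh neq0.
case: (eqVneq D (block_cuts n h.+1, block_cuts n h.+1)) => [eqD | neqD]; last first.
  by have [D' [step D'h]] := dyadic_at_step Dh neqD; exists D'; split; last exists h.
have neq_set0 : block_cuts n h.+1 != set0 by apply: contraNneq neq0; rewrite eqD => ->.
have Dh1 : dyadic_at h.+1 D by rewrite eqD /dyadic_at /= subxx block_cutsS.
have neqD1 : D != (block_cuts n h.+2, block_cuts n h.+2).
  by rewrite eqD xpair_eqE andbb eq_sym block_cutsS_neq.
by have [D' [step D'h]] := dyadic_at_step Dh1 neqD1; exists D'; split; last exists h.+1.
Qed.

Lemma dyadic_merge_path n m (D : {set 'I_n} * {set 'I_n}) :
  dyadic_division D -> #|D.1| + #|D.2| = m ->
  exists s : nat -> {set 'I_n} * {set 'I_n},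
    [/\ s 0 = D, s m = (set0, set0), (forall t, t < m -> merge_step (s t) (s t.+1))
      & forall t, t <= m -> dyadic_division (s t)].
Proof.
elim: m D => [|m IHm] D DD cardD.
  exists (fun=> D); split => //.
  case: D cardD {DD} => R C /= /eqP; rewrite addn_eq0 !cards_eq0 => /andP [/eqP -> /eqP ->] //.
have neq0 : D != (set0, set0).
  by apply: contra_eq_neq cardD => ->; rewrite !cards0.
have [D' [step DD']] := dyadic_division_step DD neq0.
have cardD' : #|D'.1| + #|D'.2| = m by apply: succn_inj; rewrite -(merge_step_card step).
have [s [s0 sm s_step s_dyadic]] := IHm D' DD' cardD'.
exists (fun t => if t is t'.+1 then s t' else D); split => //.
  by case=> [|t] /=; [rewrite s0 | rewrite ltnS; exact: s_step].
by case=> [|t] //= /s_dyadic.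
Qed.

Lemma card_all_cuts n : #|all_cuts n| = n.-1.
Proof.
case: n => [|n]; first by apply/eqP; rewrite -leqn0 (leq_trans (max_card _)) ?card_ord.
have -> : all_cuts n.+1 = [set~ ord0] by apply/setP => k; rewrite !inE lt0n -val_eqE.
by rewrite cardsC1 card_ord.
Qed.

Lemma dyadic_at_all_cuts n : dyadic_at 0 (all_cuts n, all_cuts n).
Proof.
have -> : all_cuts n = block_cuts n 0.
  by apply/setP => k; rewrite mem_block_cuts inE expn0 dvd1n andbT.
by rewrite /dyadic_at /= subxx block_cutsS.
Qed.

Lemma twin_ordered_lca_parity_mx n d : 2 <= d -> twin_ordered (lca_parity_mx n) d.
Proof.
move=> le_2d; have card0 : #|all_cuts n| + #|all_cuts n| = 2 * n - 2.
  by rewrite card_all_cuts; lia.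
have [s [s0 sm s_step s_dyadic]] :=
  dyadic_merge_path (ex_intro _ 0 (dyadic_at_all_cuts n)) card0.
exists s; split; first by [].
by move=> t /s_dyadic [h /(dyadic_at_wide le_2d)].
Qed.

Lemma twin_ordered_twin_width_le n (M : 'M[bool]_n) d :
  twin_ordered M d -> twin_width_le M d.
Proof.
exists 1%g, 1%g; suff -> : (\matrix_(i, j) M ((1 : 'S_n)%g i) ((1 : 'S_n)%g j))%R = M by [].
by apply/matrixP => i j; rewrite mxE !perm1.
Qed.

Theorem theorem4 :
  exists (c N : nat), 0 < c /\
    forall n : nat, N <= n ->
      exists M : 'M[bool]_n,
        twin_width_le M 3 /\
        n * trunc_log 2 n <= c * row_coherence M /\
        n * trunc_log 2 n <= c * col_coherence M.
Proof.
exists 24, 5; split => // -[|n] // le_4n.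
exists (lca_parity_mx n.+1); split.
  exact/twin_ordered_twin_width_le/twin_ordered_lca_parity_mx.
have row_bound : n.+1 * trunc_log 2 n.+1 <= 24 * row_coherence (lca_parity_mx n.+1).
  by rewrite (leq_trans (n_log_le_level_sum le_4n)) // leq_mul2l row_hamming_sum_lca_ge orbT.
by split; rewrite // /col_coherence tr_lca_parity_mx.
Qed.
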